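(* Let $m \ge 2$ and $n \ge 2m-2$ be integers. Then for every real $r$ with $|r|<1$, $$\int_{-1}^1 \frac{U_n(s)(1-s^2)^{m-\frac{1}{2}}}{s-r}\,ds = \pi(-1)^{m}\left(\frac{1}{2}\right)^{2m-2}\sum_{j=0}^{2m-2}(-1)^j\binom{2m-2}{j}T_{n+3-2m+2j}(r),$$ where the integral is a Cauchy principal-value integral.
   Context: $T_k(s)=\cos(k\cos^{-1}s)$ is the Tchebyshev polynomial of the first kind and $U_k(s)=\frac{\sin((k+1)\cos^{-1}s)}{\sin(\cos^{-1}s)}$ is the Tchebyshev polynomial of the second kind, $k=0,1,2,\dots$. The integral with singular point $s=r\in(-1,1)$ is understood in the Cauchy principal-value sense. $\binom{a}{j}=\frac{a!}{j!(a-j)!}$. *)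

From Stdlib Require Import Reals.
From Coquelicot Require Import Coquelicot.
Open Scope R_scope.

Definition ChebT (k : nat) (s : R) : R := cos (INR k * acos s).

Definition ChebU (k : nat) (s : R) : R :=
  sin (INR (S k) * acos s) / sin (acos s).

Definition is_PV_integral (f : R -> R) (a b c v : R) : Prop :=
  filterlim (fun eps => RInt f a (c - eps) + RInt f (c + eps) b)
    (at_right 0) (locally v).

From Stdlib Require Import Reals Lra Lia.
From Coquelicot Require Import Coquelicot.
Open Scope R_scope.

(* With s = cos t one has U_k(s) sqrt(1 - s^2) = sin((k+1) t) and
   (1 - s^2)^(m-1) = sin(t)^(2m-2).  Since sin(t)^2 sin(x t) is -1/4 times the
   second central difference of x |-> sin(x t) with step 1, the binomial theorem
   gives U_n(s) (1 - s^2)^(m-1) = (-1/4)^(m-1) sum_j (-1)^j C(2m-2, j) U_(n+2-2m+2j)(s).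
   The theorem then follows termwise from Glauert's formula
     PV int_(-1)^1 U_k(s) sqrt(1 - s^2) / (s - r) ds = - pi T_(k+1)(r).
   The three-term recurrence, s / (s - r) = 1 + r / (s - r) and
   int_(-1)^1 U_k(s) sqrt(1 - s^2) ds = (pi/2) [k = 0] reduce it to k = 0, which is
   computed from an explicit antiderivative after the substitution s = cos t; its
   logarithmic singularity at t = acos r cancels between the two sides of r. *)

(** * Cauchy principal values *)

Lemma at_right_0_of_lt (d : posreal) (P : R -> Prop) :
  (forall e, 0 < e < d -> P e) -> at_right 0 P.
Proof.
  intros H. exists d. intros e He Hpos. apply H.
  change (Rabs (e - 0) < d) in He. apply Rabs_lt_between' in He. lra.
Qed.

Lemma filterlim_at_right_0_affine (c k : R) :
  filterlim (fun e => c + k * e) (at_right 0) (locally c).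
Proof.
  apply (filterlim_filter_le_1 (F := locally 0)).
  - intros P [d Hd]. exists d. intros e He _. exact (Hd e He).
  - assert (H : continuous (fun e => c + k * e) 0).
    { apply (ex_derive_continuous (fun e => c + k * e)). auto_derive; auto. }
    unfold continuous in H. rewrite Rmult_0_r, Rplus_0_r in H. exact H.
Qed.

Definition continuous_off (c : R) (f : R -> R) : Prop :=
  forall x, x <> c -> continuous f x.

Lemma continuous_off_plus c f g :
  continuous_off c f -> continuous_off c g -> continuous_off c (fun s => f s + g s).
Proof. intros Hf Hg x Hx. apply (continuous_plus f g); auto. Qed.

Lemma continuous_off_scal c k f :
  continuous_off c f -> continuous_off c (fun s => k * f s).
Proof. intros Hf x Hx. apply (continuous_scal (fun _ => k) f); [apply continuous_const | auto]. Qed.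

Lemma continuous_off_div c g :
  (forall x, continuous g x) -> continuous_off c (fun s => g s / (s - c)).
Proof.
  intros Hg x Hx. apply (continuous_mult g (fun s => / (s - c))); [apply Hg|].
  apply (continuous_Rinv_comp (fun s => s - c)).
  - apply (ex_derive_continuous (fun s => s - c)). auto_derive; auto.
  - intro; apply Hx; lra.
Qed.

Lemma ex_RInt_continuous_off c f x y :
  continuous_off c f -> Rmax x y < c \/ c < Rmin x y -> ex_RInt f x y.
Proof.
  intros Hf Hxy. apply (ex_RInt_continuous (V := R_CompleteNormedModule)).
  intros z Hz. apply Hf. lra.
Qed.

Section PrincipalValue.

Variables a b c : R.
Hypothesis Habc : a < c < b.

Lemma ex_RInt_continuous_off_pieces f e : continuous_off c f -> 0 < e ->
  ex_RInt f a (c - e) /\ ex_RInt f (c + e) b.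
Proof.
  intros Hf He. split; apply (ex_RInt_continuous_off c); auto.
  - left. apply Rmax_lub_lt; lra.
  - right. apply Rmin_glb_lt; lra.
Qed.

Lemma is_PV_integral_plus f g u v :
  continuous_off c f -> continuous_off c g ->
  is_PV_integral f a b c u -> is_PV_integral g a b c v ->
  is_PV_integral (fun s => f s + g s) a b c (u + v).
Proof.
  intros Cf Cg Hf Hg.
  apply filterlim_ext_loc with
    (fun e => (RInt f a (c - e) + RInt f (c + e) b) + (RInt g a (c - e) + RInt g (c + e) b)).
  - apply (at_right_0_of_lt (mkposreal 1 Rlt_0_1)). intros e [He _].
    destruct (ex_RInt_continuous_off_pieces f e Cf He) as [Lf Rf].
    destruct (ex_RInt_continuous_off_pieces g e Cg He) as [Lg Rg].
    rewrite (RInt_plus f g _ _ Lf Lg : RInt (fun s => f s + g s) a (c - e) = _),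
      (RInt_plus f g _ _ Rf Rg : RInt (fun s => f s + g s) (c + e) b = _).
    change (plus ?x ?y) with (x + y). ring.
  - apply (filterlim_comp_2 _ _ Rplus Hf Hg), (filterlim_plus u v).
Qed.

Lemma is_PV_integral_scal k f v :
  continuous_off c f -> is_PV_integral f a b c v ->
  is_PV_integral (fun s => k * f s) a b c (k * v).
Proof.
  intros Cf Hf.
  apply filterlim_ext_loc with (fun e => k * (RInt f a (c - e) + RInt f (c + e) b)).
  - apply (at_right_0_of_lt (mkposreal 1 Rlt_0_1)). intros e [He _].
    destruct (ex_RInt_continuous_off_pieces f e Cf He) as [Lf Rf].
    rewrite (RInt_scal f _ _ k Lf : RInt (fun s => k * f s) a (c - e) = _),
      (RInt_scal f _ _ k Rf : RInt (fun s => k * f s) (c + e) b = _).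
    change (scal k ?x) with (k * x). ring.
  - eapply filterlim_comp; [exact Hf | apply (filterlim_scal_r k v)].
Qed.

Lemma is_PV_integral_sum (F : nat -> R -> R) (v : nat -> R) N :
  (forall j, continuous_off c (F j)) ->
  (forall j, is_PV_integral (F j) a b c (v j)) ->
  is_PV_integral (fun s => sum_f_R0 (fun j => F j s) N) a b c (sum_f_R0 v N).
Proof.
  intros CF HF.
  assert (Csum : forall N, continuous_off c (fun s => sum_f_R0 (fun j => F j s) N)).
  { induction N0 as [|N0 IH]; [apply CF | apply continuous_off_plus; auto]. }
  induction N as [|N IH]; [apply HF | apply is_PV_integral_plus; auto].
Qed.

Lemma is_PV_integral_ext f g v :
  (forall s, a < s < b -> s <> c -> f s = g s) ->
  is_PV_integral f a b c v -> is_PV_integral g a b c v.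
Proof.
  intros Efg Hf. eapply filterlim_ext_loc; [|exact Hf].
  assert (Hd : 0 < Rmin (c - a) (b - c)) by (apply Rmin_glb_lt; lra).
  apply (at_right_0_of_lt (mkposreal _ Hd)). intros e [He Hed]. simpl in Hed.
  pose proof (Rmin_l (c - a) (b - c)). pose proof (Rmin_r (c - a) (b - c)).
  f_equal; apply RInt_ext; intros x Hx;
    rewrite Rmin_left, Rmax_right in Hx by lra; apply Efg; lra.
Qed.

Lemma is_PV_integral_of_continuous_parts f F G (d : posreal) :
  (forall e, 0 < e < d -> RInt f a (c - e) + RInt f (c + e) b = F (c - e) + G (c + e)) ->
  continuous F c -> continuous G c -> is_PV_integral f a b c (F c + G c).
Proof.
  intros E CF CG.
  apply filterlim_ext_loc with (fun e => F (c + -1 * e) + G (c + 1 * e)).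
  - apply (at_right_0_of_lt d). intros e He. rewrite E by exact He.
    f_equal; f_equal; ring.
  - eapply (filterlim_comp_2 _ _ Rplus).
    + eapply filterlim_comp; [apply filterlim_at_right_0_affine | exact CF].
    + eapply filterlim_comp; [apply filterlim_at_right_0_affine | exact CG].
    + apply (filterlim_plus (F c) (G c)).
Qed.

Lemma is_PV_integral_continuous g :
  (forall x, continuous g x) -> is_PV_integral g a b c (RInt g a b).
Proof.
  intros Cg.
  assert (Ig : forall x y, ex_RInt g x y).
  { intros x y. apply (ex_RInt_continuous (V := R_CompleteNormedModule)). auto. }
  pose (F := fun x => RInt g a x).
  assert (CF : continuous F c).
  { apply (continuous_RInt_1 g a c F). exists (mkposreal 1 Rlt_0_1).
    intros y _. apply (RInt_correct (V := R_CompleteNormedModule)), Ig. }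
  replace (RInt g a b) with (F c + (RInt g a b - F c)) by ring.
  apply (is_PV_integral_of_continuous_parts g F (fun x => RInt g a b - F x)
           (mkposreal 1 Rlt_0_1)).
  - intros e _. unfold F.
    rewrite <- (RInt_Chasles g a (c + e) b) by apply Ig.
    change (plus ?x ?y) with (x + y). ring.
  - exact CF.
  - apply (continuous_minus (fun _ => RInt g a b) F); [apply continuous_const | exact CF].
Qed.

Lemma is_PV_integral_mul_id g v :
  (forall x, continuous g x) ->
  is_PV_integral (fun s => g s / (s - c)) a b c v ->
  is_PV_integral (fun s => s * g s / (s - c)) a b c (RInt g a b + c * v).
Proof.
  intros Cg Hv.
  apply is_PV_integral_ext with (fun s => g s + c * (g s / (s - c))).
  { intros s _ Hs. field. intro; apply Hs; lra. }
  apply is_PV_integral_plus.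
  - intros x _. apply Cg.
  - apply continuous_off_scal, continuous_off_div, Cg.
  - apply is_PV_integral_continuous, Cg.
  - apply is_PV_integral_scal; [apply continuous_off_div, Cg | exact Hv].
Qed.

End PrincipalValue.

(** * Chebyshev polynomials *)

(* Unlike [ChebU], whose quotient form degenerates at s = -1 and s = 1, the
   recurrence form is a polynomial, hence continuous on all of R. *)
Fixpoint ChebU_poly (k : nat) (s : R) : R :=
  match k with
  | O => 1
  | S O => 2 * s
  | S ((S k') as k1) => 2 * s * ChebU_poly k1 s - ChebU_poly k' s
  end.

Lemma ChebU_poly_SS k s :
  ChebU_poly (S (S k)) s = 2 * s * ChebU_poly (S k) s - ChebU_poly k s.
Proof. reflexivity. Qed.

Lemma ChebU_poly_cos k y : ChebU_poly k (cos y) * sin y = sin (INR (S k) * y).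
Proof.
  revert k; apply Nat.pair_induction.
  - intros ? ? ->; reflexivity.
  - simpl. ring_simplify (1 * y). ring.
  - simpl. replace ((1 + 1) * y) with (2 * y) by ring. rewrite sin_2a. ring.
  - intros k H0 H1. rewrite ChebU_poly_SS.
    set (x := INR (S (S k)) * y) in *.
    replace (INR (S (S (S k))) * y) with (x + y) by (unfold x; rewrite (S_INR (S (S k))); ring).
    replace (INR (S k) * y) with (x - y) in H0 by (unfold x; rewrite (S_INR (S k)); ring).
    replace ((2 * cos y * ChebU_poly (S k) (cos y) - ChebU_poly k (cos y)) * sin y)
      with (2 * cos y * (ChebU_poly (S k) (cos y) * sin y) - ChebU_poly k (cos y) * sin y)
      by ring.
    rewrite H0, H1, sin_plus, sin_minus. ring.
Qed.

Lemma continuous_ChebU_poly k x : continuous (ChebU_poly k) x.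
Proof.
  assert (C2 : continuous (fun s => 2 * s) x).
  { apply (ex_derive_continuous (fun s => 2 * s)). auto_derive; auto. }
  revert k; apply Nat.pair_induction.
  - intros ? ? ->; reflexivity.
  - apply continuous_const.
  - exact C2.
  - intros k H0 H1.
    apply (continuous_minus (fun s => 2 * s * ChebU_poly (S k) s) (ChebU_poly k)); [|exact H0].
    apply (continuous_mult (fun s => 2 * s) (ChebU_poly (S k))); [exact C2 | exact H1].
Qed.

Lemma ChebU_ChebU_poly k s : -1 < s < 1 -> ChebU k s = ChebU_poly k s.
Proof.
  intros Hs. unfold ChebU.
  assert (Hsin : 0 < sin (acos s)).
  { pose proof (acos_bound_lt s Hs). apply sin_gt_0; lra. }
  rewrite <- ChebU_poly_cos, cos_acos by lra. field. lra.
Qed.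

Lemma ChebT_1 r : -1 <= r <= 1 -> ChebT 1 r = r.
Proof. intros Hr. unfold ChebT. simpl. rewrite Rmult_1_l. apply cos_acos, Hr. Qed.

Lemma ChebT_SS k r : -1 <= r <= 1 ->
  ChebT (S (S k)) r = 2 * r * ChebT (S k) r - ChebT k r.
Proof.
  intros Hr. unfold ChebT. set (x := INR (S k) * acos r).
  replace (INR (S (S k)) * acos r) with (x + acos r) by (unfold x; rewrite (S_INR (S k)); ring).
  replace (INR k * acos r) with (x - acos r) by (unfold x; rewrite S_INR; ring).
  rewrite cos_plus, cos_minus, cos_acos by exact Hr. ring.
Qed.

Lemma sqrt_1_minus_cos_sq y : 0 <= y <= PI -> sqrt (1 - cos y ^ 2) = sin y.
Proof.
  intros Hy. replace (1 - cos y ^ 2) with (sin y)² by (rewrite sin2; unfold Rsqr; ring).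
  apply sqrt_Rsqr, sin_ge_0; lra.
Qed.

Lemma continuous_sqrt_1_minus_sq x : continuous (fun s => sqrt (1 - s ^ 2)) x.
Proof.
  apply (continuous_sqrt_comp (fun s => 1 - s ^ 2)).
  apply (ex_derive_continuous (fun s => 1 - s ^ 2)). auto_derive; auto.
Qed.

Lemma continuous_ChebU_poly_sqrt k x :
  continuous (fun s => ChebU_poly k s * sqrt (1 - s ^ 2)) x.
Proof.
  apply (continuous_mult (ChebU_poly k));
    [apply continuous_ChebU_poly | apply continuous_sqrt_1_minus_sq].
Qed.

Lemma RInt_ChebU_poly_sqrt k :
  RInt (fun s => ChebU_poly k s * sqrt (1 - s ^ 2)) (-1) 1 =
  RInt (fun y => - sin y * sin (INR (S k) * y)) PI 0.
Proof.
  pose proof PI_RGT_0.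
  transitivity (RInt (fun s => ChebU_poly k s * sqrt (1 - s ^ 2)) (cos PI) (cos 0)).
  { rewrite cos_PI, cos_0. reflexivity. }
  rewrite <- (RInt_comp _ cos (fun y => - sin y)).
  - apply RInt_ext. intros y Hy. rewrite Rmin_right, Rmax_left in Hy by lra.
    rewrite sqrt_1_minus_cos_sq, <- ChebU_poly_cos by lra. reflexivity.
  - intros; apply continuous_ChebU_poly_sqrt.
  - intros y _. split.
    + auto_derive; auto. ring.
    + apply (ex_derive_continuous (fun y => - sin y)). auto_derive; auto.
Qed.

Lemma RInt_ChebU_poly_sqrt_0 :
  RInt (fun s => ChebU_poly 0 s * sqrt (1 - s ^ 2)) (-1) 1 = PI / 2.
Proof.
  rewrite RInt_ChebU_poly_sqrt.
  set (Phi := fun y => sin (2 * y) / 4 - y / 2).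
  transitivity (minus (Phi 0) (Phi PI)).
  - apply is_RInt_unique, (is_RInt_derive Phi).
    + intros y _. unfold Phi. auto_derive; auto. simpl.
      rewrite (Rmult_1_l y), cos_2a_sin. field.
    + intros y _. apply (ex_derive_continuous (fun y => - sin y * sin (INR 1 * y))).
      auto_derive; auto.
  - unfold minus, plus, opp, Phi; simpl. rewrite Rmult_0_r, sin_0, sin_2PI. field.
Qed.

Lemma sin_INR_mult_PI j : sin (INR j * PI) = 0.
Proof.
  induction j as [|j IH]; [rewrite Rmult_0_l; apply sin_0|].
  rewrite S_INR, Rmult_plus_distr_r, Rmult_1_l, sin_plus, IH, sin_PI. ring.
Qed.

Lemma RInt_ChebU_poly_sqrt_S k :
  RInt (fun s => ChebU_poly (S k) s * sqrt (1 - s ^ 2)) (-1) 1 = 0.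
Proof.
  rewrite RInt_ChebU_poly_sqrt.
  set (A := INR (S (S k))).
  assert (HA : 2 <= A) by (unfold A; rewrite !S_INR; pose proof (pos_INR k); lra).
  set (Phi := fun y => sin ((A + 1) * y) / (2 * (A + 1)) - sin ((A - 1) * y) / (2 * (A - 1))).
  transitivity (minus (Phi 0) (Phi PI)).
  - apply is_RInt_unique, (is_RInt_derive Phi).
    + intros y _. unfold Phi. auto_derive; [auto|].
      replace ((A + 1) * y) with (A * y + y) by ring.
      replace ((A - 1) * y) with (A * y - y) by ring.
      rewrite cos_plus, cos_minus. field. lra.
    + intros y _. apply (ex_derive_continuous (fun y => - sin y * sin (A * y))).
      auto_derive; auto.
  - unfold minus, plus, opp, Phi; simpl. rewrite !Rmult_0_r, sin_0.
    replace (A + 1) with (INR (S (S (S k)))) by (unfold A; rewrite (S_INR (S (S k))); ring).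
    replace (A - 1) with (INR (S k)) by (unfold A; rewrite (S_INR (S k)); ring).
    rewrite !sin_INR_mult_PI. field. split; apply not_0_INR; lia.
Qed.

(** * Glauert's formula *)

(* An antiderivative of -sin(y)^2 / (cos y - r) = cos y + r - (1 - r^2) / (cos y - r)
   on each interval where cos y <> r; the singular part is the logarithm of
   |cos y - r| in [kernel_primitive]. *)
Definition kernel_primitive_reg (r y : R) : R :=
  sin y + r * y - sqrt (1 - r ^ 2) * ln (1 - r * cos y + sqrt (1 - r ^ 2) * sin y).

Definition kernel_primitive (r y : R) : R :=
  kernel_primitive_reg r y + sqrt (1 - r ^ 2) * ln (Rabs (cos y - r)).

Lemma kernel_log_arg_pos r y : -1 < r < 1 -> 0 <= y <= PI ->
  0 < 1 - r * cos y + sqrt (1 - r ^ 2) * sin y.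
Proof.
  intros Hr Hy.
  assert (0 <= sqrt (1 - r ^ 2) * sin y).
  { apply Rmult_le_pos; [apply sqrt_pos | apply sin_ge_0; lra]. }
  assert (r * cos y < 1).
  { pose proof (COS_bound y). destruct (Rle_or_lt 0 r); nra. }
  lra.
Qed.

Lemma sign_div_Rabs u : u <> 0 -> sign u * / Rabs u = / u.
Proof.
  intros Hu. destruct (Rlt_or_le u 0) as [Hn|Hp].
  - rewrite sign_eq_m1, Rabs_left by exact Hn. field. exact Hu.
  - rewrite sign_eq_1, Rabs_right by lra. field. exact Hu.
Qed.

Lemma is_derive_kernel_primitive r y : -1 < r < 1 -> 0 <= y <= PI -> cos y <> r ->
  is_derive (kernel_primitive r) y (- sin y ^ 2 / (cos y - r)).
Proof.
  intros Hr Hy Hc.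
  assert (Hcr : cos y - r <> 0) by (intro; apply Hc; lra).
  pose proof (kernel_log_arg_pos r y Hr Hy) as HN.
  unfold kernel_primitive, kernel_primitive_reg. auto_derive.
  { repeat split; auto. apply Rabs_pos_lt. exact Hcr. }
  replace (1 - r * (r * 1)) with (1 - r ^ 2) by ring.
  rewrite Rmult_assoc, sign_div_Rabs by exact Hcr.
  set (w := sqrt (1 - r ^ 2)) in *. set (N := 1 - r * cos y + w * sin y) in *.
  assert (Hw : w * w = 1 - r ^ 2) by (apply sqrt_sqrt; nra).
  assert (Hs : sin y ^ 2 = 1 - cos y ^ 2) by (rewrite <- (sin2_cos2 y); unfold Rsqr; ring).
  assert (K : (r * sin y + w * cos y) * (cos y - r) + sin y * N = w * N).
  { transitivity (w * N + sin y * (1 - r ^ 2 - w * w) + w * (sin y ^ 2 + cos y ^ 2 - 1));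
      [unfold N; ring|].
    rewrite Hw, Hs. ring. }
  transitivity (cos y + r - w * (((r * sin y + w * cos y) * (cos y - r) + sin y * N)
                                / (N * (cos y - r)))).
  { unfold N. field. split; [exact Hcr | unfold N in HN; lra]. }
  rewrite K.
  transitivity (cos y + r - w * w / (cos y - r)); [field; split; [exact Hcr | lra]|].
  rewrite Hw, Hs. field. exact Hcr.
Qed.

Lemma RInt_sqrt_kernel_cos r u v : -1 < r < 1 -> 0 <= u <= v -> v <= PI ->
  (forall y, u <= y <= v -> cos y <> r) ->
  RInt (fun s => sqrt (1 - s ^ 2) / (s - r)) (cos v) (cos u) =
  kernel_primitive r u - kernel_primitive r v.
Proof.
  intros Hr Huv Hv Hc.
  rewrite <- (RInt_comp _ cos (fun y => - sin y)).
  - transitivity (RInt (fun y => - sin y ^ 2 / (cos y - r)) v u).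
    + apply RInt_ext. intros y Hy. rewrite Rmin_right, Rmax_left in Hy by lra.
      rewrite sqrt_1_minus_cos_sq by lra.
      assert (cos y - r <> 0) by (intro; apply (Hc y); lra).
      unfold scal; simpl; unfold mult; simpl. field. assumption.
    + apply is_RInt_unique, (is_RInt_derive (kernel_primitive r)).
      * intros y Hy. rewrite Rmin_right, Rmax_left in Hy by lra.
        apply is_derive_kernel_primitive; auto; lra.
      * intros y Hy. rewrite Rmin_right, Rmax_left in Hy by lra.
        assert (cos y - r <> 0) by (intro; apply (Hc y); lra).
        apply (ex_derive_continuous (fun y => - sin y ^ 2 / (cos y - r))).
        auto_derive. assumption.
  - intros y Hy. rewrite Rmin_right, Rmax_left in Hy by lra.
    apply continuous_off_div; [apply continuous_sqrt_1_minus_sq | apply Hc; lra].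
  - intros y _. split.
    + auto_derive; auto. ring.
    + apply (ex_derive_continuous (fun y => - sin y)). auto_derive; auto.
Qed.

Lemma kernel_primitive_acos r t : -1 <= t <= 1 ->
  kernel_primitive r (acos t) =
  kernel_primitive_reg r (acos t) + sqrt (1 - r ^ 2) * ln (Rabs (t - r)).
Proof. intros Ht. unfold kernel_primitive. rewrite cos_acos by exact Ht. reflexivity. Qed.

Lemma kernel_primitive_0 r : -1 < r < 1 -> kernel_primitive r 0 = 0.
Proof.
  intros Hr. unfold kernel_primitive, kernel_primitive_reg.
  rewrite sin_0, cos_0, Rabs_right by lra.
  replace (1 - r * 1 + sqrt (1 - r ^ 2) * 0) with (1 - r) by ring. ring.
Qed.

Lemma kernel_primitive_PI r : -1 < r < 1 -> kernel_primitive r PI = r * PI.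
Proof.
  intros Hr. unfold kernel_primitive, kernel_primitive_reg.
  rewrite sin_PI, cos_PI, Rabs_left by lra.
  replace (- (-1 - r)) with (1 - r * -1 + sqrt (1 - r ^ 2) * 0) by ring. ring.
Qed.

Lemma continuous_kernel_primitive_reg_acos r : -1 < r < 1 ->
  continuous (fun t => kernel_primitive_reg r (acos t)) r.
Proof.
  intros Hr. apply (continuous_comp acos (kernel_primitive_reg r)).
  - apply continuity_pt_filterlim, derivable_continuous_pt, derivable_pt_acos. exact Hr.
  - pose proof (kernel_log_arg_pos r (acos r) Hr (acos_bound r)).
    apply (ex_derive_continuous (kernel_primitive_reg r)).
    unfold kernel_primitive_reg. auto_derive. auto.
Qed.

Lemma is_PV_integral_sqrt_kernel r : -1 < r < 1 ->
  is_PV_integral (fun s => sqrt (1 - s ^ 2) / (s - r)) (-1) 1 r (- PI * r).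
Proof.
  intros Hr. pose proof PI_RGT_0.
  set (Q := fun t => kernel_primitive_reg r (acos t)).
  assert (CQ : continuous Q r) by apply continuous_kernel_primitive_reg_acos, Hr.
  replace (- PI * r) with ((Q r - r * PI) + - Q r) by ring.
  assert (Hd : 0 < Rmin (1 + r) (1 - r)) by (apply Rmin_glb_lt; lra).
  apply (is_PV_integral_of_continuous_parts _ _ _ _ (fun t => Q t - r * PI) (fun t => - Q t)
           (mkposreal _ Hd)).
  - intros e [He Hed]. simpl in Hed.
    pose proof (Rmin_l (1 + r) (1 - r)). pose proof (Rmin_r (1 + r) (1 - r)).
    pose proof (acos_bound (r - e)). pose proof (acos_bound (r + e)).
    set (f := fun s => sqrt (1 - s ^ 2) / (s - r)).
    assert (Left : RInt f (-1) (r - e) =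
                   kernel_primitive r (acos (r - e)) - kernel_primitive r PI).
    { transitivity (RInt f (cos PI) (cos (acos (r - e))));
        [rewrite cos_PI, cos_acos by lra; reflexivity|].
      apply RInt_sqrt_kernel_cos; try lra.
      intros y Hy. enough (cos y <= cos (acos (r - e))) by (rewrite cos_acos in *; lra).
      apply cos_decr_1; lra. }
    assert (Right : RInt f (r + e) 1 =
                    kernel_primitive r 0 - kernel_primitive r (acos (r + e))).
    { transitivity (RInt f (cos (acos (r + e))) (cos 0));
        [rewrite cos_0, cos_acos by lra; reflexivity|].
      apply RInt_sqrt_kernel_cos; try lra.
      intros y Hy. enough (cos (acos (r + e)) <= cos y) by (rewrite cos_acos in *; lra).
      apply cos_decr_1; lra. }
    rewrite Left, Right, kernel_primitive_PI, kernel_primitive_0, !kernel_primitive_acos by lra.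
    replace (r - e - r) with (- e) by ring. replace (r + e - r) with e by ring.
    rewrite Rabs_Ropp. unfold Q. ring.
  - apply (continuous_minus Q (fun _ => r * PI)); [exact CQ | apply continuous_const].
  - apply (continuous_opp Q), CQ.
Qed.

Lemma is_PV_integral_ChebU_poly_sqrt r k : -1 < r < 1 ->
  is_PV_integral (fun s => ChebU_poly k s * sqrt (1 - s ^ 2) / (s - r)) (-1) 1 r
    (- PI * ChebT (S k) r).
Proof.
  intros Hr. assert (Hr' : -1 <= r <= 1) by lra.
  set (H := fun k s => ChebU_poly k s * sqrt (1 - s ^ 2)).
  assert (CH : forall k x, continuous (H k) x) by apply continuous_ChebU_poly_sqrt.
  assert (CsH : forall k, continuous_off r (fun s => s * H k s / (s - r))).
  { intros j. apply (continuous_off_div r (fun s => s * H j s)). intros x.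
    apply (continuous_mult (fun s => s) (H j)); [apply continuous_id | apply CH]. }
  assert (Hstep : forall k v,
    is_PV_integral (fun s => H k s / (s - r)) (-1) 1 r v ->
    is_PV_integral (fun s => 2 * (s * H k s / (s - r))) (-1) 1 r
      (2 * (RInt (H k) (-1) 1 + r * v))).
  { intros j v Hv. apply (is_PV_integral_scal _ _ _ Hr); [apply CsH|].
    apply (is_PV_integral_mul_id _ _ _ Hr); [apply CH | exact Hv]. }
  assert (I0 : is_PV_integral (fun s => H 0%nat s / (s - r)) (-1) 1 r (- PI * ChebT 1 r)).
  { rewrite ChebT_1 by exact Hr'.
    apply (is_PV_integral_ext _ _ _ Hr (fun s => sqrt (1 - s ^ 2) / (s - r))).
    - intros s _ _. unfold H. cbn [ChebU_poly]. unfold Rdiv. ring.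
    - apply is_PV_integral_sqrt_kernel, Hr. }
  revert k; apply Nat.pair_induction.
  - intros ? ? ->; reflexivity.
  - exact I0.
  - replace (- PI * ChebT 2 r) with (2 * (RInt (H 0%nat) (-1) 1 + r * (- PI * ChebT 1 r))).
    2:{ unfold H. rewrite RInt_ChebU_poly_sqrt_0, (ChebT_SS 0), ChebT_1 by exact Hr'.
        unfold ChebT. simpl. rewrite Rmult_0_l, cos_0. field. }
    apply (is_PV_integral_ext _ _ _ Hr (fun s => 2 * (s * H 0%nat s / (s - r)))).
    + intros s _ Hs. unfold H. simpl. field. intro; apply Hs; lra.
    + apply Hstep, I0.
  - intros j I_j I_Sj.
    replace (- PI * ChebT (S (S (S j))) r) with
      (2 * (RInt (H (S j)) (-1) 1 + r * (- PI * ChebT (S (S j)) r))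
       + -1 * (- PI * ChebT (S j) r)).
    2:{ unfold H. rewrite RInt_ChebU_poly_sqrt_S, (ChebT_SS (S j)) by exact Hr'. ring. }
    apply (is_PV_integral_ext _ _ _ Hr
             (fun s => 2 * (s * H (S j) s / (s - r)) + -1 * (H j s / (s - r)))).
    + intros s _ Hs. unfold H. rewrite ChebU_poly_SS. field. intro; apply Hs; lra.
    + apply (is_PV_integral_plus _ _ _ Hr).
      * apply continuous_off_scal, CsH.
      * apply continuous_off_scal, continuous_off_div, CH.
      * apply Hstep, I_Sj.
      * apply (is_PV_integral_scal _ _ _ Hr); [apply continuous_off_div, CH | exact I_j].
Qed.

Lemma is_PV_integral_ChebU_poly_sqrt_sum r (c : nat -> R) (idx : nat -> nat) N :
  -1 < r < 1 ->
  is_PV_integral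
    (fun s => sum_f_R0 (fun j => c j * (ChebU_poly (idx j) s * sqrt (1 - s ^ 2) / (s - r))) N)
    (-1) 1 r (sum_f_R0 (fun j => c j * (- PI * ChebT (S (idx j)) r)) N).
Proof.
  intros Hr. apply (is_PV_integral_sum _ _ _ Hr); intros j.
  - apply continuous_off_scal, continuous_off_div, continuous_ChebU_poly_sqrt.
  - apply (is_PV_integral_scal _ _ _ Hr).
    + apply continuous_off_div, continuous_ChebU_poly_sqrt.
    + apply is_PV_integral_ChebU_poly_sqrt, Hr.
Qed.

(** * Expansion of (1 - s^2)^M U_(k+2M)(s) *)

Lemma sum_binomial_pascal L (g : nat -> R) :
  sum_f_R0 (fun j => Binomial.C (S L) j * g j) (S L) =
  sum_f_R0 (fun j => Binomial.C L j * g j) L +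
  sum_f_R0 (fun j => Binomial.C L j * g (S j)) L.
Proof.
  destruct L as [|L].
  - simpl. rewrite !C_n_0, C_n_n. ring.
  - rewrite (decomp_sum _ (S (S L))), (decomp_sum (fun j => Binomial.C (S L) j * g j) (S L))
      by lia.
    simpl pred. rewrite tech5, (tech5 (fun j => Binomial.C (S L) j * g (S j))).
    rewrite (sum_eq (fun i => Binomial.C (S (S L)) (S i) * g (S i))
               (fun i => Binomial.C (S L) i * g (S i) + Binomial.C (S L) (S i) * g (S i))).
    + rewrite plus_sum, !C_n_0, !C_n_n. ring.
    + intros i Hi. rewrite <- pascal by lia. ring.
Qed.

Definition binomial_difference (f : R -> R) (L : nat) (x : R) : R :=
  sum_f_R0 (fun j => (-1) ^ j * Binomial.C L j * f (x - INR L + 2 * INR j)) L.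

Lemma binomial_difference_S f L x :
  binomial_difference f (S L) x =
  binomial_difference f L (x - 1) - binomial_difference f L (x + 1).
Proof.
  unfold binomial_difference.
  set (g := fun j => (-1) ^ j * f (x - INR (S L) + 2 * INR j)).
  rewrite (sum_eq _ (fun j => Binomial.C (S L) j * g j)) by (intros; unfold g; ring).
  rewrite sum_binomial_pascal, <- minus_sum, <- plus_sum.
  apply sum_eq. intros j _. unfold g.
  replace (x - INR (S L) + 2 * INR j) with (x - 1 - INR L + 2 * INR j) by (rewrite S_INR; ring).
  replace (x - INR (S L) + 2 * INR (S j)) with (x + 1 - INR L + 2 * INR j)
    by (rewrite !S_INR; ring).
  simpl pow. ring.
Qed.

Lemma sin_sq_mul_sin t x :
  sin t ^ 2 * sin (x * t) =
  -1/4 * (sin ((x - 1 - 1) * t) - sin ((x - 1 + 1) * t)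
          - (sin ((x + 1 - 1) * t) - sin ((x + 1 + 1) * t))).
Proof.
  replace ((x - 1 - 1) * t) with (x * t - 2 * t) by ring.
  replace ((x - 1 + 1) * t) with (x * t) by ring.
  replace ((x + 1 - 1) * t) with (x * t) by ring.
  replace ((x + 1 + 1) * t) with (x * t + 2 * t) by ring.
  rewrite sin_minus, sin_plus, cos_2a_sin. field.
Qed.

Lemma sin_pow_mul_sin M t x :
  sin t ^ (2 * M) * sin (x * t) =
  (-1/4) ^ M * binomial_difference (fun u => sin (u * t)) (2 * M) x.
Proof.
  revert x. induction M as [|M IH]; intros x.
  - unfold binomial_difference. simpl. rewrite C_n_0.
    replace (x - 0 + 2 * 0) with x by ring. ring.
  - replace (2 * S M)%nat with (S (S (2 * M))) by lia.
    rewrite !binomial_difference_S.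
    replace (sin t ^ S (S (2 * M))) with (sin t ^ (2 * M) * sin t ^ 2) by (simpl; ring).
    rewrite Rmult_assoc, sin_sq_mul_sin.
    set (p := sin t ^ (2 * M)).
    transitivity (-1/4 * (p * sin ((x - 1 - 1) * t) - p * sin ((x - 1 + 1) * t)
                          - (p * sin ((x + 1 - 1) * t) - p * sin ((x + 1 + 1) * t))));
      [ring|].
    unfold p. rewrite !IH.
    simpl pow. ring.
Qed.

Lemma ChebU_poly_mul_pow M k s : -1 < s < 1 ->
  (1 - s ^ 2) ^ M * ChebU_poly (k + 2 * M) s =
  (-1/4) ^ M *
  sum_f_R0 (fun j => (-1) ^ j * Binomial.C (2 * M) j * ChebU_poly (k + 2 * j) s) (2 * M).
Proof.
  intros Hs. set (t := acos s).
  assert (Ht : 0 < t < PI) by apply acos_bound_lt, Hs.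
  assert (Hsin : 0 < sin t) by (apply sin_gt_0; lra).
  replace s with (cos t) by (apply cos_acos; lra).
  apply Rmult_eq_reg_r with (sin t); [|lra].
  replace (1 - cos t ^ 2) with (sin t ^ 2) by (rewrite <- (sin2_cos2 t); unfold Rsqr; ring).
  rewrite <- pow_mult, Rmult_assoc, ChebU_poly_cos, sin_pow_mul_sin, Rmult_assoc.
  unfold binomial_difference.
  rewrite (Rmult_comm (sum_f_R0 _ _) (sin t)), (scal_sum _ _ (sin t)). f_equal.
  apply sum_eq. intros j _. rewrite (Rmult_assoc _ (ChebU_poly _ _)), ChebU_poly_cos.
  replace (INR (S (k + 2 * M)) - INR (2 * M) + 2 * INR j) with (INR (S (k + 2 * j)))
    by (rewrite !S_INR, !plus_INR, !mult_INR; simpl; ring).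
  reflexivity.
Qed.

Theorem mainTheorem2 (m n : nat) (Hm : (2 <= m)%nat) (Hn : (2 * m - 2 <= n)%nat)
  (r : R) (Hr : Rabs r < 1) :
  is_PV_integral
    (fun s => ChebU n s * ((1 - s ^ 2) ^ (m - 1) * sqrt (1 - s ^ 2)) / (s - r))
    (-1) 1 r
    (PI * (-1) ^ m * (1 / 2) ^ (2 * m - 2) *
       sum_f_R0 (fun j => (-1) ^ j * Binomial.C (2 * m - 2) j *
                          ChebT (n + 3 - 2 * m + 2 * j) r) (2 * m - 2)).
Proof.
  assert (Hr' : -1 < r < 1) by (apply Rabs_def2 in Hr; lra).
  destruct m as [|M]; [lia|].
  replace (S M - 1)%nat with M by lia.
  replace (2 * S M - 2)%nat with (2 * M)%nat by lia.
  destruct (Nat.le_exists_sub (2 * M) n) as [k [-> _]]; [lia|].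
  set (c := fun j => (-1/4) ^ M * ((-1) ^ j * Binomial.C (2 * M) j)).
  apply (is_PV_integral_ext _ _ _ Hr' (fun s => sum_f_R0 (fun j =>
           c j * (ChebU_poly (k + 2 * j) s * sqrt (1 - s ^ 2) / (s - r))) (2 * M))).
  - intros s Hs _. rewrite ChebU_ChebU_poly by exact Hs.
    transitivity ((1 - s ^ 2) ^ M * ChebU_poly (k + 2 * M) s * (sqrt (1 - s ^ 2) / (s - r)));
      [|unfold Rdiv; ring].
    rewrite ChebU_poly_mul_pow, Rmult_assoc, (Rmult_comm (sum_f_R0 _ _)), !scal_sum
      by exact Hs.
    apply sum_eq. intros j _. unfold c, Rdiv. ring.
  - replace (PI * (-1) ^ S M * (1 / 2) ^ (2 * M) * _)
      with (sum_f_R0 (fun j => c j * (- PI * ChebT (S (k + 2 * j)) r)) (2 * M)).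
    + apply is_PV_integral_ChebU_poly_sqrt_sum, Hr'.
    + assert (Hc : (-1/4) ^ M = (-1) ^ M * (1/2) ^ (2 * M))
        by (rewrite pow_mult, <- Rpow_mult_distr; f_equal; field).
      rewrite scal_sum. apply sum_eq. intros j _.
      replace (k + 2 * M + 3 - 2 * S M + 2 * j)%nat with (S (k + 2 * j)) by lia.
      unfold c. rewrite Hc. simpl pow. ring.
Qed.
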